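(* Let $c \in (0,1/2]$, $t_1 \in [0,1-2c]$, $t_2 \in [t_1+c,1-c]$, and $p,q\in(0,1)$ with $p\neq q$. Then \[ W_1(\mu_p,\mu_q) = \frac{t_2-t_1}{1-c}\,|p-q|. \]
   Context: Let $S_1(x)=cx+t_1$ and $S_2(x)=cx+t_2$ on $[0,1]$, and let $F\subseteq[0,1]$ be the unique nonempty compact set with $F=S_1(F)\cup S_2(F)$. For $p\in(0,1)$, $\mu_p$ is the unique Borel probability measure on $[0,1]$ with $\mu_p = p\,\mu_p\circ S_1^{-1} + (1-p)\,\mu_p\circ S_2^{-1}$. For Borel probability measures $\mu,\nu$ on $[0,1]$ and $\rho\ge1$, $W_\rho(\mu,\nu)=\inf_{\gamma}\left(\int |x-y|^\rho\,d\gamma(x,y)\right)^{1/\rho}$, the infimum over all Borel probability measures $\gamma$ on $[0,1]^2$ with first marginal $\mu$ and second marginal $\nu$. *)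

From HB Require Import structures.
From mathcomp Require Import all_boot all_order all_algebra.
From mathcomp Require Import all_classical all_reals all_analysis.
Set Implicit Arguments. Unset Strict Implicit. Unset Printing Implicit Defensive.
Import Order.TTheory GRing.Theory Num.Theory.
Local Open Scope classical_set_scope.
Local Open Scope ring_scope.

Definition Smap (R : realType) (c t : R) : R -> R := fun x => c * x + t.

(* mu is a Borel probability measure on R concentrated on [0,1] satisfying
   mu = p mu o S1^{-1} + (1-p) mu o S2^{-1}; by uniqueness this is mu_p. *)
Definition is_ss_measure (R : realType) (c t1 t2 p : R) (mu : probability R R) : Prop :=
  mu `[0%R, 1%R]%classic = 1%E /\
  forall A : set R, measurable A ->
    mu A = (p%:E * mu (Smap c t1 @^-1` A) + (1 - p)%:E * mu (Smap c t2 @^-1` A))%E.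

Definition is_coupling (R : realType) (mu nu : probability R R)
    (gamma : probability (R * R)%type R) : Prop :=
  (forall A : set R, measurable A -> gamma (A `*` setT) = mu A) /\
  (forall B : set R, measurable B -> gamma (setT `*` B) = nu B).

Definition W1 (R : realType) (mu nu : probability R R) : \bar R :=
  ereal_inf [set (\int[gamma]_z (`|z.1 - z.2|)%:E)%E
            | gamma in [set g | is_coupling mu nu g]].

From HB Require Import structures.
From mathcomp Require Import all_boot all_order all_algebra.
From mathcomp Require Import all_classical all_reals all_analysis.
From mathcomp Require Import measurable_realfun ring lra.
Import Order.TTheory GRing.Theory Num.Theory.
Import numFieldTopology.Exports numFieldNormedType.Exports.
Local Open Scope classical_set_scope.
Local Open Scope ring_scope.

(* For two probability measures on [[0, 1]] whose distribution functions are
   ordered, [W1] is the difference of their means: the 1-Lipschitz function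
   [clamp01] bounds the cost of every coupling from below by that difference,
   and the quantile coupling attains it.  The self-similar measures are
   ordered in this way: for [q < p] the difference [F_p - F_q] of their
   distribution functions satisfies a recursion which, because the images
   [S_1 [0, 1]] and [S_2 [0, 1]] do not overlap, contracts by [max p (1 - p)]
   up to a nonnegative term, so it is nonnegative.  Finally the mean [m] of
   [mu_p] solves [m = p (c m + t1) + (1 - p) (c m + t2)]. *)

Section distribution_function.
Context {R : realType} (mu : probability R R).

Definition pcdf (x : R) : R := fine (mu `]-oo, x]%classic).

Lemma pcdfE x : (pcdf x)%:E = mu `]-oo, x]%classic.
Proof. by rewrite /pcdf fineK // fin_num_measure. Qed.

Lemma pcdf_ge0 x : 0 <= pcdf x.
Proof. by rewrite -lee_fin pcdfE. Qed.

Lemma pcdf_le1 x : pcdf x <= 1.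
Proof. by rewrite -lee_fin pcdfE probability_le1. Qed.

Lemma pcdf_nondecreasing : nondecreasing_fun pcdf.
Proof.
move=> x y xy; rewrite -lee_fin !pcdfE; apply: le_measure; rewrite ?inE //.
by apply: subset_itv; rewrite bnd_simp.
Qed.

Lemma pcdf_itv_oc a b : a <= b -> mu `]a, b]%classic = (pcdf b - pcdf a)%:E.
Proof.
move=> ab; have -> : `]a, b]%classic = `]-oo, b]%classic `\` `]-oo, a]%classic.
  by rewrite -[RHS]setCK setCD setCitvl setUC -[LHS]setCK setCitv.
rewrite measureD ?setIidr ?EFinB ?pcdfE //; first exact: subset_itvl.
by rewrite -ge0_fin_numE // fin_num_measure.
Qed.

Let idR : R -> R := id.
#[local] HB.instance Definition _ :=
  isMeasurableFun.Build _ _ R R idR (@measurable_id _ R setT).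

Lemma pcdf_right_continuous : right_continuous pcdf.
Proof.
move=> x.
have := @cdf_right_continuous _ _ _ mu (idR : {RV mu >-> R}) x.
rewrite -[cdf _ x]pcdfE => /fine_cvg; apply: cvg_trans.
by apply: near_eq_cvg; near=> y.
Unshelve. all: by end_near. Qed.

Hypothesis mu01 : mu `[0, 1]%classic = 1%E.

Lemma measure_setC_itv01 : mu (~` `[0, 1]%classic) = 0%E.
Proof. by rewrite probability_setC // mu01 subee. Qed.

Lemma pcdf_lt0 x : x < 0 -> pcdf x = 0.
Proof.
move=> x0; apply/eqP; rewrite eq_le pcdf_ge0 andbT -lee_fin pcdfE.
rewrite (_ : 0%:E = 0%E) // -measure_setC_itv01.
apply: le_measure; rewrite ?inE //; first exact: measurableC.
by move=> y /=; rewrite !in_itv /= => yx /andP[y0 _]; lra.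
Qed.

Lemma pcdf_ge1 x : 1 <= x -> pcdf x = 1.
Proof.
move=> x1; apply/eqP; rewrite eq_le pcdf_le1 /= -lee_fin pcdfE -mu01.
apply: le_measure; rewrite ?inE // => y /=; rewrite !in_itv /=.
by move=> /andP[_ y1]; exact: le_trans y1 x1.
Qed.

End distribution_function.

Section quantile.
Context {R : realType} (mu : probability R R).

(* [quantile] is the generalised inverse of [pcdf mu], clamped to [[0, 1]]
   so that it is total and nondecreasing in [u]. *)
Let Qset u := [set y | 0 <= y /\ (u <= pcdf mu y \/ 1 <= y)].

Definition quantile (u : R) : R := inf (Qset u).

Let Qset_neq0 u : Qset u !=set0.
Proof. by exists 1; split => //; right. Qed.

Let Qset_lbound u : lbound (Qset u) 0.
Proof. by move=> y []. Qed.

Lemma quantile_ge0 u : 0 <= quantile u.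
Proof. exact: lb_le_inf. Qed.

Lemma quantile_le u y : 0 <= y -> u <= pcdf mu y \/ 1 <= y -> quantile u <= y.
Proof. by move=> y0 uy; apply: ge_inf; [exists 0 | split]. Qed.

Lemma quantile_le1 u : quantile u <= 1.
Proof. by apply: quantile_le => //; right. Qed.

Lemma quantile_nondecreasing : nondecreasing_fun quantile.
Proof.
move=> u v uv; apply: lb_le_inf => // y [y0 [vy|y1]]; apply: quantile_le => //.
- by left; exact: le_trans vy.
- by right.
Qed.

Lemma measurable_quantile : measurable_fun setT quantile.
Proof. exact: nondecreasing_measurable quantile_nondecreasing. Qed.

Hypothesis mu01 : mu `[0, 1]%classic = 1%E.

(* Right continuity of [pcdf mu] is what makes the infimum attained. *)
Lemma quantile_leP u x : 0 < u <= 1 -> (quantile u <= x) = (u <= pcdf mu x).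
Proof.
case/andP=> u0 u1; apply/idP/idP => [Qx|ux]; last first.
  apply: quantile_le; last by left.
  by rewrite leNgt; apply/negP => /(pcdf_lt0 mu mu01) Fx0; move: ux; rewrite Fx0; lra.
rewrite leNgt; apply/negP => Fxu.
have [y [xy Fyu]] : exists y, x < y /\ pcdf mu y < u.
  have Fnear : \forall y \near x^'+, pcdf mu y < u.
    exact: (cvgr_lt _ (pcdf_right_continuous mu x) _ Fxu).
  by have [y [? ?]] := filter_ex (filterI (nbhs_right_gt x) Fnear); exists y.
suff : y <= quantile u by lra.
apply: lb_le_inf => // z [z0 [uz|z1]]; rewrite leNgt; apply/negP => zy.
- by have := pcdf_nondecreasing mu _ _ (ltW zy); lra.
- by move: Fyu; rewrite (pcdf_ge1 mu mu01) ?(le_trans z1 (ltW zy)); lra.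
Qed.

End quantile.

Lemma quantile_le_quantile {R : realType} (mu nu : probability R R) u :
  (forall x, pcdf nu x <= pcdf mu x) -> quantile mu u <= quantile nu u.
Proof.
move=> numu; apply: lb_le_inf; first by exists 1; split => //; right.
move=> y [y0 [uy|y1]]; apply: quantile_le => //.
- by left; exact: le_trans uy (numu y).
- by right.
Qed.

Section uniform01.
Variable R : realType.
Local Open Scope ereal_scope.

(* Lebesgue measure restricted to [(0, 1]], the interval on which
   [quantile_leP] applies. *)
Definition unif01 (A : set R) : \bar R := lebesgue_measure (A `&` `]0%R, 1%R]%classic).

Let unif01_0 : unif01 set0 = 0.
Proof. by rewrite /unif01 set0I measure0. Qed.

Let unif01_ge0 A : 0 <= unif01 A.
Proof. exact: measure_ge0. Qed.

Let unif01_sigma_additive : semi_sigma_additive unif01.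
Proof.
move=> F mF tF mUF; rewrite /unif01 setI_bigcupl.
apply: measure_semi_sigma_additive.
- by move=> n; apply: measurableI => //; exact: mF.
- exact: trivIset_setIr.
- by rewrite -setI_bigcupl; apply: measurableI.
Qed.

HB.instance Definition _ :=
  isMeasure.Build _ _ _ unif01 unif01_0 unif01_ge0 unif01_sigma_additive.

Let unif01_setT : unif01 setT = 1.
Proof. by rewrite /unif01 setTI lebesgue_measure_itv /= lte01 -EFinD subr0. Qed.

HB.instance Definition _ := Measure_isProbability.Build _ _ _ unif01 unif01_setT.

Lemma unif01_itv_oc (a b : R) : (0 <= a <= b)%R -> (b <= 1)%R ->
  unif01 `]a, b]%classic = (b - a)%:E.
Proof.
move=> /andP[a0 ab] b1; rewrite /unif01 setIidl; last first.
  by move=> x /=; rewrite !in_itv /=; lra.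
rewrite lebesgue_measure_itv /= lte_fin.
by case: ltgtP ab => // -> _; rewrite subrr.
Qed.

End uniform01.

Lemma ge0_integral_comp_preimage {d1 d2} {X : measurableType d1}
    {Y : measurableType d2} {R : realType} {P : {measure set X -> \bar R}}
    {mu : {measure set Y -> \bar R}} {phi : X -> Y} {f : Y -> \bar R} :
  measurable_fun setT phi ->
  (forall A, measurable A -> P (phi @^-1` A) = mu A) ->
  measurable_fun setT f -> (forall y, (0 <= f y)%E) ->
  (\int[P]_x f (phi x) = \int[mu]_y f y)%E.
Proof.
move=> mphi Pmu mf f0.
have := @ge0_integral_pushforward _ _ _ _ R phi mphi P setT f.
rewrite preimage_setT => <- //; apply: eq_measure_integral => A mA _.
by rewrite -Pmu.
Qed.

HB.instance Definition _ (R : realType) (mu : probability R R) :=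
  isMeasurableFun.Build _ _ R R (quantile mu) (measurable_quantile mu).

Lemma unif01_quantile_preimage {R : realType} (mu : probability R R) :
  mu `[0, 1]%classic = 1%E ->
  forall A, measurable A -> unif01 R (quantile mu @^-1` A) = mu A.
Proof.
move=> mu01 A mA.
suff : distribution (unif01 R) (quantile mu) A = mu A by [].
apply: (measure_unique (@ocitv R)
   (fun k : nat => [set` Interval (BSide false (1 *- k)) (BSide false k%:R)])) => //.
- exact: ocitvI.
- by move=> k; exact: is_ocitv.
- exact: bigcup_itvT.
- move=> _ [[a b] _ <-] /=.
  have [ab|ba] := leP a b; last first.
    by rewrite set_itv_ge ?measure0 // bnd_simp -leNgt ltW.
  rewrite pcdf_itv_oc // /distribution /pushforward /unif01.
  have -> : quantile mu @^-1` `]a, b]%classic `&` `]0, 1]%classic =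
            `]pcdf mu a, pcdf mu b]%classic `&` `]0, 1]%classic.
    apply/seteqP; split => u [uab u01] /=; split => //; move: uab; move: u01;
      by rewrite /= !in_itv /= => u01; rewrite !ltNge !(quantile_leP mu mu01 u _ u01).
  rewrite -/(unif01 R _) unif01_itv_oc ?pcdf_le1 //.
  by rewrite pcdf_ge0 pcdf_nondecreasing.
- by move=> k; rewrite (le_lt_trans (probability_le1 _ _)) ?ltry.
Qed.

Section clamp01.
Context {R : realType}.

Definition clamp01 (x : R) : R := Num.min (Num.max x 0) 1.

Lemma clamp01_ge0 x : 0 <= clamp01 x.
Proof. by rewrite /clamp01 /Num.max /Num.min; repeat case: ifPn => /=; lra. Qed.

Lemma EFin_clamp01_ge0 x : (0 <= (clamp01 x)%:E)%E.
Proof. by rewrite lee_fin clamp01_ge0. Qed.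

Lemma clamp01_le1 x : clamp01 x <= 1.
Proof. by rewrite /clamp01 /Num.max /Num.min; repeat case: ifPn => /=; lra. Qed.

Lemma clamp01_id x : 0 <= x <= 1 -> clamp01 x = x.
Proof. by case/andP => x0 x1; rewrite /clamp01 (max_idPl x0) (min_idPl x1). Qed.

Lemma clamp01_nondecreasing : nondecreasing_fun clamp01.
Proof. by move=> x y xy; rewrite /clamp01 /Num.max /Num.min; repeat case: ifPn => /=; lra. Qed.

Lemma clamp01_lipschitz x y : `|clamp01 x - clamp01 y| <= `|x - y|.
Proof.
have := ler_norm (x - y); have := ler_norm (y - x); rewrite (distrC y) ler_norml.
by rewrite /clamp01 /Num.max /Num.min; repeat case: ifPn => /=; lra.
Qed.

Lemma measurable_clamp01 : measurable_fun setT clamp01.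
Proof. exact: nondecreasing_measurable clamp01_nondecreasing. Qed.

Lemma measurable_EFin_clamp01 : measurable_fun setT (fun x => (clamp01 x)%:E).
Proof. by apply/measurable_EFinP; exact: measurable_clamp01. Qed.

End clamp01.

Section mean_and_cost.
Context {R : realType}.
Local Open Scope ereal_scope.

(* For a measure on [[0, 1]] this is the usual mean; clamping only makes
   the integrand bounded, hence integrable for every probability. *)
Definition mean (mu : probability R R) : R := fine (\int[mu]_x (clamp01 x)%:E).

Lemma meanE mu : (mean mu)%:E = \int[mu]_x (clamp01 x)%:E.
Proof.
rewrite /mean fineK // ge0_fin_numE; last by apply: integral_ge0 => x _; exact: EFin_clamp01_ge0.
apply: (@le_lt_trans _ _ (\int[mu]_x (cst 1%:E x))); last first.
  by rewrite integral_cst // mul1e (le_lt_trans (probability_le1 _ _)) ?ltry.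
apply: ge0_le_integral => //; first by move=> x _; exact: EFin_clamp01_ge0.
- exact: measurable_EFin_clamp01.
- by move=> x _; rewrite lee_fin clamp01_le1.
Qed.

Definition cost (g : probability (R * R)%type R) : \bar R :=
  \int[g]_z (`|z.1 - z.2|)%:E.

Lemma cost_ge0 g : 0 <= cost g.
Proof. by apply: integral_ge0 => z _; rewrite lee_fin. Qed.

Lemma measurable_EFin_dist : measurable_fun setT (fun z : R * R => (`|z.1 - z.2|)%:E).
Proof. by apply/measurable_EFinP; apply: measurableT_comp => //; exact: measurable_funB. Qed.

Lemma coupling_integral_fst {mu nu : probability R R} {g : probability (R * R)%type R}
    (f : R -> \bar R) :
  is_coupling mu nu g -> measurable_fun setT f -> (forall x, 0 <= f x) ->
  \int[g]_z f z.1 = \int[mu]_x f x.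
Proof.
case=> g1 _ mf f0; apply: ge0_integral_comp_preimage => // A mA.
transitivity (g (A `*` setT)); last exact: g1.
by congr (g _); apply/seteqP; split => z //= [].
Qed.

Lemma coupling_integral_snd {mu nu : probability R R} {g : probability (R * R)%type R}
    (f : R -> \bar R) :
  is_coupling mu nu g -> measurable_fun setT f -> (forall x, 0 <= f x) ->
  \int[g]_z f z.2 = \int[nu]_x f x.
Proof.
case=> _ g2 mf f0; apply: ge0_integral_comp_preimage => // A mA.
transitivity (g (setT `*` A)); last exact: g2.
by congr (g _); apply/seteqP; split => z //= [].
Qed.

Lemma integral_clamp01_le_cost (g : probability (R * R)%type R) (a b : R * R -> R) :
  measurable_fun setT a -> measurable_fun setT b ->
  (forall z, (`|a z - b z| <= `|z.1 - z.2|)%R) ->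
  \int[g]_z (clamp01 (a z))%:E <= cost g + \int[g]_z (clamp01 (b z))%:E.
Proof.
move=> ma mb ab; have mclamp h : measurable_fun setT h ->
    measurable_fun setT (fun z : R * R => (clamp01 (h z))%:E).
  by move=> mh; apply/measurable_EFinP; exact: measurableT_comp measurable_clamp01 mh.
rewrite -ge0_integralD //; last 3 first.
- exact: measurable_EFin_dist.
- by move=> z _; exact: EFin_clamp01_ge0.
- exact: mclamp.
apply: ge0_le_integral => //; first by move=> z _; exact: EFin_clamp01_ge0.
- exact: mclamp.
- by apply: emeasurable_funD; [exact: measurable_EFin_dist | exact: mclamp].
move=> z _; rewrite -EFinD lee_fin -lerBlDr.
exact: le_trans (ler_norm _) (le_trans (clamp01_lipschitz _ _) (ab z)).
Qed.

Lemma mean_dist_le_cost (mu nu : probability R R) (g : probability (R * R)%type R) :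
  is_coupling mu nu g -> (`|mean mu - mean nu|)%:E <= cost g.
Proof.
move=> cpl; have clamp0 := @EFin_clamp01_ge0 R.
have Efst : \int[g]_z (clamp01 z.1)%:E = (mean mu)%:E.
  by rewrite meanE (coupling_integral_fst (fun x => (clamp01 x)%:E) cpl) //;
    exact: measurable_EFin_clamp01.
have Esnd : \int[g]_z (clamp01 z.2)%:E = (mean nu)%:E.
  by rewrite meanE (coupling_integral_snd (fun x => (clamp01 x)%:E) cpl) //;
    exact: measurable_EFin_clamp01.
have le1 : (mean mu)%:E <= cost g + (mean nu)%:E.
  rewrite -Efst -Esnd.
  exact: integral_clamp01_le_cost measurable_fst measurable_snd (fun z => lexx _).
have le2 : (mean nu)%:E <= cost g + (mean mu)%:E.
  rewrite -Efst -Esnd; apply: integral_clamp01_le_cost measurable_snd measurable_fst _.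
  by move=> z; rewrite distrC.
move: le1 le2 (cost_ge0 g); case: (cost g) => [r | | ] /=.
- by rewrite -!EFinD !lee_fin ler_norml => ? ? ?; lra.
- by move=> *; rewrite leey.
- by move=> _ _; rewrite leeNy_eq.
Qed.

End mean_and_cost.

Section quantile_coupling.
Context {R : realType}.
Local Open Scope ereal_scope.

Definition quantile_pair (mu nu : probability R R) (u : R) : R * R :=
  (quantile mu u, quantile nu u).

Lemma measurable_quantile_pair (mu nu : probability R R) : measurable_fun setT (quantile_pair mu nu).
Proof. exact: measurable_fun_pair (measurable_quantile mu) (measurable_quantile nu). Qed.

HB.instance Definition _ (mu nu : probability R R) :=
  isMeasurableFun.Build _ _ R (R * R)%type (quantile_pair mu nu)
    (measurable_quantile_pair mu nu).

Definition quantile_coupling (mu nu : probability R R) : probability (R * R)%type R :=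
  distribution (unif01 R) (quantile_pair mu nu).

Section on_unit_interval.
Variables (mu nu : probability R R).
Hypotheses (mu01 : mu `[0%R, 1%R]%classic = 1) (nu01 : nu `[0%R, 1%R]%classic = 1).

Lemma is_coupling_quantile : is_coupling mu nu (quantile_coupling mu nu).
Proof.
split => A mA; rewrite /quantile_coupling /distribution /pushforward.
- rewrite -(unif01_quantile_preimage mu mu01 A mA).
  by congr (unif01 R _); apply/seteqP; split => u //= [].
- rewrite -(unif01_quantile_preimage nu nu01 A mA).
  by congr (unif01 R _); apply/seteqP; split => u //= [].
Qed.

Lemma integral_quantile : \int[unif01 R]_u (quantile mu u)%:E = (mean mu)%:E.
Proof.
rewrite meanE -(ge0_integral_comp_preimage (measurable_quantile mu)
  (unif01_quantile_preimage mu mu01)); last 2 first.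
- exact: measurable_EFin_clamp01.
- exact: EFin_clamp01_ge0.
by apply: eq_integral => u _; rewrite clamp01_id // quantile_ge0 quantile_le1.
Qed.

End on_unit_interval.

Lemma cost_quantile_coupling (mu nu : probability R R) :
  cost (quantile_coupling mu nu) =
  \int[unif01 R]_u (`|quantile mu u - quantile nu u|)%:E.
Proof. by rewrite /cost ge0_integral_distribution //; exact: measurable_EFin_dist. Qed.

Lemma cost_quantile_couplingC (mu nu : probability R R) :
  cost (quantile_coupling mu nu) = cost (quantile_coupling nu mu).
Proof.
by rewrite !cost_quantile_coupling; apply: eq_integral => u _; rewrite distrC.
Qed.

Lemma cost_quantile_coupling_ordered (mu nu : probability R R) :
  mu `[0%R, 1%R]%classic = 1 -> nu `[0%R, 1%R]%classic = 1 ->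
  (forall x, (pcdf nu x <= pcdf mu x)%R) ->
  cost (quantile_coupling mu nu) = (`|mean mu - mean nu|)%:E.
Proof.
move=> mu01 nu01 numu.
have Qle u : (quantile mu u <= quantile nu u)%R by exact: quantile_le_quantile.
have mQ := measurable_quantile.
have : (mean nu)%:E = (mean mu)%:E + cost (quantile_coupling mu nu).
  rewrite cost_quantile_coupling -!integral_quantile // -ge0_integralD //; last 3 first.
  - by move=> u _; rewrite lee_fin quantile_ge0.
  - by apply/measurable_EFinP; exact: mQ.
  - by apply/measurable_EFinP; apply: measurableT_comp => //; exact: measurable_funB.
  by apply: eq_integral => u _; rewrite -EFinD distrC ger0_norm ?subr_ge0 // subrKC.
have := cost_ge0 (quantile_coupling mu nu).
case: (cost _) => // r; rewrite lee_fin -EFinD => r0 [->].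
by rewrite opprD addNKr normrN ger0_norm.
Qed.

End quantile_coupling.

Theorem W1_stochastically_ordered {R : realType} (mu nu : probability R R) :
  mu `[0%R, 1%R]%classic = 1%E -> nu `[0%R, 1%R]%classic = 1%E ->
  (forall x, pcdf nu x <= pcdf mu x) \/ (forall x, pcdf mu x <= pcdf nu x) ->
  W1 mu nu = (`|mean mu - mean nu|)%:E.
Proof.
move=> mu01 nu01 ordered.
have costQ : cost (quantile_coupling mu nu) = (`|mean mu - mean nu|)%:E.
  case: ordered => ord; first exact: cost_quantile_coupling_ordered.
  by rewrite cost_quantile_couplingC cost_quantile_coupling_ordered // distrC.
apply/eqP; rewrite eq_le; apply/andP; split.
- by rewrite -costQ; apply: ereal_inf_lbound; exists (quantile_coupling mu nu) => //;
    exact: is_coupling_quantile.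
- by apply: le_ereal_inf_tmp => _ [g cpl <-]; exact: mean_dist_le_cost.
Qed.

Lemma ge0_of_contraction {R : realType} (D : R -> R) (a : R) :
  0 <= a < 1 -> (forall x, -1 <= D x) ->
  (forall x, exists w y, 0 <= w <= a /\ w * D y <= D x) ->
  forall x, 0 <= D x.
Proof.
case/andP=> a0 a1 Dge1 Dcontr.
have Dge n x : - a ^+ n <= D x.
  elim: n x => [|n IHn] x; first by rewrite expr0.
  have [w [y [/andP[w0 wa] wD]]] := Dcontr x.
  have := ler_wpM2l w0 (IHn y); have := ler_wpM2r (exprn_ge0 n a0) wa.
  by rewrite exprS; nra.
move=> x; rewrite leNgt; apply/negP => Dx0.
have [n an] : exists n, a ^+ n < - D x.
  have an0 : a ^+ n @[n --> \oo] --> 0 by apply: cvg_expr; rewrite ger0_norm.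
  have Dx0' : 0 < - D x by rewrite oppr_gt0.
  exact: filter_ex (cvgr_lt _ an0 _ Dx0').
by have := Dge n x; lra.
Qed.

Section self_similar.
Context {R : realType}.
Context {c t1 t2 : R}.

Lemma measurable_Smap t : measurable_fun setT (Smap c t).
Proof. exact: measurable_funD. Qed.

HB.instance Definition _ t :=
  isMeasurableFun.Build _ _ R R (Smap c t) (measurable_Smap t).

Lemma Smap_preimage_itvNy t x : 0 < c ->
  Smap c t @^-1` `]-oo, x]%classic = `]-oo, (x - t) / c]%classic.
Proof.
move=> c0; apply/seteqP; split => y /=; rewrite !in_itv /= /Smap ler_pdivlMr // mulrC; lra.
Qed.

Lemma pcdf_self_similar {p} {mu : probability R R} x : 0 < c ->
  is_ss_measure c t1 t2 p mu ->
  pcdf mu x = p * pcdf mu ((x - t1) / c) + (1 - p) * pcdf mu ((x - t2) / c).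
Proof.
move=> c0 [_ ss]; apply/EFin_inj.
by rewrite pcdfE ss // !Smap_preimage_itvNy // -!pcdfE -!EFinM -EFinD.
Qed.

(* The difference of the two distribution functions satisfies a recursion
   in which, since [t1 + c <= t2], at most one of the two rescaled branches
   lies in [[0, 1)], while the remaining term has the sign of [p - q]. *)
Lemma pcdf_self_similar_le {p q} {mu nu : probability R R} :
  0 < c -> t1 + c <= t2 -> 0 < p < 1 -> q <= p ->
  is_ss_measure c t1 t2 p mu -> is_ss_measure c t1 t2 q nu ->
  forall x, pcdf nu x <= pcdf mu x.
Proof.
move=> c0 t12 /andP[p0 p1] qp ssmu ssnu.
pose D x := pcdf mu x - pcdf nu x.
have D0 y : y < 0 \/ 1 <= y -> D y = 0.
  case=> y01; rewrite /D.
  - by rewrite (pcdf_lt0 mu ssmu.1) // (pcdf_lt0 nu ssnu.1) // subrr.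
  - by rewrite (pcdf_ge1 mu ssmu.1) // (pcdf_ge1 nu ssnu.1) // subrr.
suff D_ge0 x : 0 <= D x by move=> x; rewrite -subr_ge0; exact: D_ge0.
apply: (@ge0_of_contraction _ D (Num.max p (1 - p))).
- by rewrite le_max (ltW p0) gt_max p1 /=; lra.
- by move=> y; have := pcdf_ge0 mu y; have := pcdf_le1 nu y; rewrite /D; lra.
move=> {}x; set y1 := (x - t1) / c; set y2 := (x - t2) / c.
have y21 : y2 <= y1 by rewrite /y1 /y2 ler_pM2r ?invr_gt0 //; lra.
have DE : D x = p * D y1 + (1 - p) * D y2 + (p - q) * (pcdf nu y1 - pcdf nu y2).
  by rewrite /D (pcdf_self_similar x c0 ssmu) (pcdf_self_similar x c0 ssnu); ring.
have pq_ge0 : 0 <= (p - q) * (pcdf nu y1 - pcdf nu y2).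
  by rewrite mulr_ge0 ?subr_ge0 // pcdf_nondecreasing.
have [y1_lt1 | y1_ge1] := ltP y1 1.
- have y2_lt0 : y2 < 0.
    by move: y1_lt1; rewrite !ltr_pdivrMr // mul1r mul0r; lra.
  exists p, y1; rewrite le_max lexx ltW //=.
  by move: DE; rewrite (D0 y2 (or_introl y2_lt0)); lra.
- exists (1 - p), y2; rewrite le_max lexx orbT subr_ge0 ltW //=.
  by move: DE; rewrite (D0 y1 (or_intror y1_ge1)); lra.
Qed.

Lemma integral_clamp01_Smap (mu : probability R R) t :
  mu `[0, 1]%classic = 1%E -> 0 <= c -> 0 <= t -> t + c <= 1 ->
  (\int[mu]_x (clamp01 (Smap c t x))%:E = (c * mean mu + t)%:E)%E.
Proof.
move=> mu01 c0 t0 tc1.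
have mclamp := @measurable_clamp01 R.
transitivity (\int[mu]_x (c%:E * (clamp01 x)%:E + t%:E))%E.
  apply: ae_eq_integral => //.
  - by apply/measurable_EFinP; exact: measurableT_comp mclamp (measurable_Smap t).
  - by apply/measurable_EFinP; apply: measurable_funD => //; exact: measurable_funM.
  exists (~` `[0, 1]%classic); split; first exact: measurableC.
    exact: measure_setC_itv01.
  move=> x /= /not_implyP[_ Sx]; rewrite in_itv /= => /andP[x0 x1]; apply: Sx.
  rewrite -EFinM -EFinD /Smap [clamp01 x]clamp01_id ?x0 // clamp01_id //.
  by apply/andP; split; nra.
rewrite ge0_integralD //; last 2 first.
- by move=> x _; rewrite mule_ge0 ?lee_fin ?clamp01_ge0.
- by apply/measurable_EFinP; exact: measurable_funM.
rewrite ge0_integralZl_EFin //; last 2 first.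
- by move=> x _; exact: EFin_clamp01_ge0.
- exact: measurable_EFin_clamp01.
rewrite -meanE integral_cst // [X in (t%:E * X)%E](_ : _ = 1%E) ?mule1 //.
exact: probability_setT.
Qed.

Lemma mean_self_similar {p} {mu : probability R R} :
  0 <= c -> 0 <= p <= 1 -> 0 <= t1 -> t1 + c <= 1 -> 0 <= t2 -> t2 + c <= 1 ->
  is_ss_measure c t1 t2 p mu -> mean mu * (1 - c) = p * t1 + (1 - p) * t2.
Proof.
move=> c0 /andP[p0 p1] t10 t1c t20 t2c [mu01 ss].
have q0 : 0 <= 1 - p by rewrite subr_ge0.
pose M := measure_add (mscale (NngNum p0) (distribution mu (Smap c t1)))
                      (mscale (NngNum q0) (distribution mu (Smap c t2))).
have clamp0 := @EFin_clamp01_ge0 R.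
have : (mean mu)%:E = (\int[M]_x (clamp01 x)%:E)%E.
  rewrite meanE; apply: eq_measure_integral => A mA _.
  by etransitivity; [exact: ss | symmetry; exact: measure_addE].
rewrite ge0_integral_measure_add //; last exact: measurable_EFin_clamp01.
rewrite !ge0_integral_mscale //; try exact: measurable_EFin_clamp01.
rewrite !ge0_integral_distribution //; try exact: measurable_EFin_clamp01.
rewrite /= !integral_clamp01_Smap // -!EFinM -EFinD => -[meanE'].
transitivity (mean mu - c * mean mu); first by ring.
by rewrite {1}meanE'; ring.
Qed.

End self_similar.

Theorem corollary2p6 (R : realType) (c t1 t2 p q : R)
    (mu nu : probability R R) :
  0 < c <= 1 / 2 ->
  0 <= t1 <= 1 - 2 * c ->
  t1 + c <= t2 <= 1 - c ->
  0 < p < 1 -> 0 < q < 1 -> p != q ->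
  is_ss_measure c t1 t2 p mu ->
  is_ss_measure c t1 t2 q nu ->
  W1 mu nu = ((t2 - t1) / (1 - c) * `|p - q|)%:E.
Proof.
move=> /andP[c0 c12] /andP[t10 t1c] /andP[t12 t2c] p01 q01 pq ssmu ssnu.
have mean_ss (r : R) (la : probability R R) : 0 < r < 1 ->
    is_ss_measure c t1 t2 r la -> mean la = (r * t1 + (1 - r) * t2) / (1 - c).
  move=> /andP[r0 r1] ssla; have r01 : 0 <= r <= 1 by rewrite !ltW.
  have c1 : 1 - c != 0 by rewrite subr_eq0 eq_sym lt_eqF //; lra.
  by rewrite -(mean_self_similar (ltW c0) r01 t10 _ _ _ ssla) ?mulfK //; lra.
rewrite (W1_stochastically_ordered _ _ ssmu.1 ssnu.1); last first.
  case: (ltgtP p q) pq => // [pltq | qltp] _.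
  - by right; apply: (pcdf_self_similar_le c0 t12 q01 (ltW pltq)).
  - by left; apply: (pcdf_self_similar_le c0 t12 p01 (ltW qltp)).
congr (_%:E); rewrite (mean_ss p) // (mean_ss q) //.
have -> : (p * t1 + (1 - p) * t2) / (1 - c) - (q * t1 + (1 - q) * t2) / (1 - c)
    = (t2 - t1) / (1 - c) * (q - p) by ring.
by rewrite normrM distrC (@ger0_norm _ ((t2 - t1) / (1 - c))) // divr_ge0; lra.
Qed.
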